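(* Let $G$ be a connected graph with $n$ vertices and maximum degree $\Delta$, and let $L$ be a list-assignment with $|L(v)|\ge\deg(v)+1$ for all $v\in V(G)$. Let $\mathcal{C}(G,L)^f$ denote the set of frozen $L$-colourings of $G$ and $\mathcal{C}(G,L)$ the set of all $L$-colourings of $G$. Unless $G$ is a complete graph, \[\frac{|\mathcal{C}(G,L)^f|}{|\mathcal{C}(G,L)|}\le 2^{-n/\Delta^4}.\]
   Context: An $L$-colouring is a proper colouring $\varphi$ with $\varphi(v)\in L(v)$ for all $v$. A vertex $v$ is frozen under $\varphi$ if every colour of $L(v)\setminus\{\varphi(v)\}$ appears on a neighbour of $v$; an $L$-colouring is frozen if all its vertices are frozen. *)

From HB Require Import structures.
From mathcomp Require Import all_boot all_order all_algebra.
From mathcomp Require Import all_classical all_reals all_analysis.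
Set Implicit Arguments. Unset Strict Implicit. Unset Printing Implicit Defensive.
Import Order.TTheory GRing.Theory Num.Theory.

Definition simple_graph (T : finType) (e : rel T) : Prop :=
  symmetric e /\ irreflexive e.

Definition connected_graph (T : finType) (e : rel T) : Prop :=
  forall x y : T, connect e x y.

Definition complete_graph (T : finType) (e : rel T) : Prop :=
  forall x y : T, x != y -> e x y.

Definition deg (T : finType) (e : rel T) (v : T) : nat := #|[set u | e v u]|.

Definition maxdeg (T : finType) (e : rel T) : nat := \max_(v : T) deg e v.

Definition is_Lcol (T C : finType) (e : rel T) (L : T -> {set C})
  (phi : {ffun T -> C}) : bool :=
  [forall v, phi v \in L v] && [forall u, forall v, e u v ==> (phi u != phi v)].

Definition frozen_at (T C : finType) (e : rel T) (L : T -> {set C})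
  (phi : {ffun T -> C}) (v : T) : bool :=
  [forall c in L v, (c != phi v) ==> [exists u, e v u && (phi u == c)]].

Definition is_frozen_Lcol (T C : finType) (e : rel T) (L : T -> {set C})
  (phi : {ffun T -> C}) : bool :=
  is_Lcol e L phi && [forall v, frozen_at e L phi v].

Definition Lcols (T C : finType) (e : rel T) (L : T -> {set C}) :=
  [set phi : {ffun T -> C} | is_Lcol e L phi].

Definition frozen_Lcols (T C : finType) (e : rel T) (L : T -> {set C}) :=
  [set phi : {ffun T -> C} | is_frozen_Lcol e L phi].

(* In a frozen L-colouring phi with |L v| >= deg v + 1, the colours of L v
   other than phi v occur exactly once each around v.  Call g a cherry centre
   if it has two non-adjacent neighbours a g and c g, and take a maximal family
   M of cherry centres whose triples {m, a m, c m} are pairwise far apart.  For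
   every subset A of M, exchanging the colours of m and a m for all m in A
   turns a frozen colouring into an L-colouring, and A can be read back from
   the result: c m is untouched, and if m is in A its frozen colour phi m no
   longer appears around c m.  Hence |frozen| 2^|M| <= |all|.  In a connected
   non-complete graph every vertex is within distance 1 of a cherry centre, so
   by maximality within distance 4 of M, and balls of radius 4 have at most
   Delta^4 vertices; thus n <= |M| Delta^4. *)

From HB Require Import structures.
(* Analysis first, so that its set library does not shadow finset's subsetP. *)
From mathcomp Require Import all_classical all_reals all_analysis.
From mathcomp Require Import all_boot all_order all_algebra.
From mathcomp Require Import zify.
Import Order.TTheory GRing.Theory Num.Theory.
Set Implicit Arguments. Unset Strict Implicit. Unset Printing Implicit Defensive.

Lemma card_bigcup_le (I U : finType) (P : {pred I}) (F : I -> {set U}) :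
  (#|\bigcup_(i in P) F i| <= \sum_(i in P) #|F i|)%N.
Proof.
apply: (big_ind2 (fun (X : {set U}) n => #|X| <= n)%N) => [|X1 n1 X2 n2 le1 le2|//].
  by rewrite cards0.
by rewrite cardsU (leq_trans (leq_subr _ _)) ?leq_add.
Qed.

Section LColourings.
Variables (T C : finType) (e : rel T) (L : T -> {set C}).

Lemma is_LcolP (phi : {ffun T -> C}) :
  reflect ((forall v, phi v \in L v) /\ (forall u v, e u v -> phi u != phi v))
          (is_Lcol e L phi).
Proof.
apply: (iffP andP) => [[/forallP inL /forallP proper]|[inL proper]].
  by split=> // u v; move/forallP/(_ v)/implyP: (proper u).
split; apply/forallP => u //; apply/forallP => v; apply/implyP; exact: proper.
Qed.

Hypothesis large_lists : forall v, (deg e v + 1 <= #|L v|)%N.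

(* Pigeonhole: the deg v neighbours of v carry all deg v colours of L v :\ phi v. *)
Lemma frozen_nbhd_colours (phi : {ffun T -> C}) v : is_frozen_Lcol e L phi ->
  phi @: [set u | e v u] = L v :\ phi v /\ {in [set u | e v u] &, injective phi}.
Proof.
move=> /andP[/is_LcolP[inL _] /forallP/(_ v)/forall_inP frozen_v].
set N := [set u | e v u].
have sub : L v :\ phi v \subset phi @: N.
  apply/subsetP => k /setD1P[k_phiv /frozen_v]; rewrite k_phiv.
  by case/existsP => u /andP[evu /eqP <-]; rewrite imset_f ?inE.
have cardL : #|L v| = (#|L v :\ phi v|).+1 by rewrite (cardsD1 (phi v)) inL.
have := large_lists v; rewrite /deg -/N cardL addn1 ltnS => cardN.
have cardNL : (#|phi @: N| <= #|L v :\ phi v|)%N.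
  exact: leq_trans (leq_imset_card _ _) cardN.
split; first by apply/eqP; rewrite eq_sym eqEcard sub cardNL.
apply/imset_injP; rewrite eqn_leq leq_imset_card /=.
exact: leq_trans cardN (subset_leq_card sub).
Qed.

Lemma frozen_nbhd_inj (phi : {ffun T -> C}) v u u' : is_frozen_Lcol e L phi ->
  e v u -> e v u' -> phi u = phi u' -> u = u'.
Proof. by move=> /(frozen_nbhd_colours v)[_ inj] evu evu'; apply: inj; rewrite inE. Qed.

Lemma frozen_nbr_colour (phi : {ffun T -> C}) v u :
  is_frozen_Lcol e L phi -> e v u -> phi u \in L v.
Proof.
move=> /(frozen_nbhd_colours v)[colours _] evu.
by have /setD1P[] : phi u \in L v :\ phi v by rewrite -colours imset_f ?inE.
Qed.

Hypothesis e_irr : irreflexive e.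

Lemma frozen_Lcol_comp (phi : {ffun T -> C}) (s : T -> T) :
  is_frozen_Lcol e L phi -> injective s ->
  (forall x, s x = x \/ e x (s x)) ->
  (forall x y, e x y -> e (s x) (s y) \/ exists v, e v (s x) /\ e v (s y)) ->
  is_Lcol e L [ffun x => phi (s x)].
Proof.
move=> frz s_inj s_near s_edge; have /andP[/is_LcolP[inL proper] _] := frz.
apply/is_LcolP; split=> [x|x y exy]; rewrite !ffunE.
  by case: (s_near x) => [->|/(frozen_nbr_colour frz)].
case: (s_edge x y exy) => [/proper //|[v [evx evy]]].
apply: contraTneq exy => /(frozen_nbhd_inj frz evx evy)/s_inj ->.
by rewrite e_irr.
Qed.

End LColourings.

Section Exchange.
Variables (T : finType) (a : T -> T) (A : {set T}).

Definition exchange x :=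
  if x \in A then a x else if [pick m in A | a m == x] is Some m then m else x.

Variant exchange_spec (x : T) : T -> Prop :=
  | ExchangeDom m of m \in A & x = m : exchange_spec x (a m)
  | ExchangeImg m of m \in A & x = a m : exchange_spec x m
  | ExchangeFix of x \notin A & x \notin a @: A : exchange_spec x x.

Lemma exchangeP x : exchange_spec x (exchange x).
Proof.
rewrite /exchange; case: ifPn => [xA|xA]; first exact: ExchangeDom.
case: pickP => [m /andP[mA /eqP <-]|none]; first exact: ExchangeImg.
apply: ExchangeFix => //; apply/imsetP => -[m mA xE].
by move: (none m); rewrite mA xE eqxx.
Qed.

Lemma exchange_fix x : x \notin A -> x \notin a @: A -> exchange x = x.
Proof.
case: exchangeP => // [m mA -> /negP[]//|m mA -> _ /negP[]]; exact: imset_f.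
Qed.

Hypothesis a_inj : {in A &, injective a}.
Hypothesis a_out : {in A, forall m, a m \notin A}.

Lemma exchange_dom m : m \in A -> exchange m = a m.
Proof.
move=> mA; case: exchangeP => [_ _ -> //|m' m'A mE|/negP//].
by move: (a_out m'A); rewrite -mE mA.
Qed.

Lemma exchange_img m : m \in A -> exchange (a m) = m.
Proof.
move=> mA; case: exchangeP => [m' m'A amE|m' m'A /(a_inj mA m'A)//|_ /negP[]].
  by move: (a_out mA); rewrite amE m'A.
exact: imset_f.
Qed.

Lemma exchangeK : involutive exchange.
Proof.
move=> x; case: (exchangeP x) => [m mA ->|m mA ->|xA xaA].
- exact: exchange_img.
- exact: exchange_dom.
- by rewrite !exchange_fix.
Qed.

End Exchange.

Definition gnear (T : finType) (e : rel T) x y := (x == y) || e x y.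

Lemma gnearxx (T : finType) (e : rel T) x : gnear e x x.
Proof. by rewrite /gnear eqxx. Qed.

Lemma edge_gnear (T : finType) (e : rel T) x y : e x y -> gnear e x y.
Proof. by rewrite /gnear => ->; rewrite orbT. Qed.

Definition cherry (T : finType) (e : rel T) g x y :=
  [&& e g x, e g y, x != y & ~~ e x y].

Definition far_cherries (T : finType) (e : rel T) (a c : T -> T) m m' :=
  [forall p in [:: m; a m; c m], forall q in [:: m'; a m'], ~~ gnear e p q].

Definition scattered (T : finType) (e : rel T) (a c : T -> T) (M : {set T}) :=
  [forall m in M, forall m' in M, (m != m') ==> far_cherries e a c m m'].

Section ScatteredCherries.
Variables (T C : finType) (e : rel T) (L : T -> {set C}) (a c : T -> T) (M : {set T}).
Hypotheses (e_sym : symmetric e) (e_irr : irreflexive e).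
Hypothesis large_lists : forall v, (deg e v + 1 <= #|L v|)%N.
Hypothesis cherryM : {in M, forall m, cherry e m (a m) (c m)}.
Hypothesis scM : scattered e a c M.

Lemma scattered_gnear_eq m m' p q : m \in M -> m' \in M ->
  p \in [:: m; a m; c m] -> q \in [:: m'; a m'] -> gnear e p q -> m = m'.
Proof.
move=> mM m'M pm qm'; apply: contraTeq => mm'.
move/forall_inP/(_ _ mM)/forall_inP/(_ _ m'M): scM.
by rewrite mm' => /forall_inP/(_ _ pm)/forall_inP/(_ _ qm').
Qed.

Lemma a_injM : {in M &, injective a}.
Proof.
move=> m m' mM m'M amE.
by apply: (scattered_gnear_eq mM m'M _ _ (gnearxx e (a m))); rewrite ?amE !inE eqxx orbT.
Qed.

Lemma a_notinM m : m \in M -> a m \notin M.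
Proof.
move=> mM; apply/negP => amM.
have mE : m = a m.
  by apply: (scattered_gnear_eq mM amM _ _ (gnearxx e (a m))); rewrite !inE eqxx ?orbT.
by have /and4P[+ _ _ _] := cherryM mM; rewrite -mE e_irr.
Qed.

Lemma c_unmoved m : m \in M -> c m \notin M :|: a @: M.
Proof.
move=> mM; have /and4P[_ emc acm _] := cherryM mM.
apply/negP; case/setUP => [cM|/imsetP[m' m'M cE]].
  have mE : m = c m.
    by apply: (scattered_gnear_eq mM cM _ _ (gnearxx e (c m))); rewrite !inE eqxx ?orbT.
  by move: emc; rewrite -mE e_irr.
have mE : m = m'.
  by apply: (scattered_gnear_eq mM m'M _ _ (gnearxx e (c m))); rewrite ?cE !inE eqxx ?orbT.
by move: acm; rewrite cE mE eqxx.
Qed.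

Lemma nbr_c_moved m y : m \in M -> e (c m) y -> y \in M :|: a @: M -> y = m.
Proof.
move=> mM ecy; have near_cy := edge_gnear ecy.
case/setUP => [yM|/imsetP[m' m'M yE]].
  by apply/esym/(scattered_gnear_eq mM yM _ _ near_cy); rewrite !inE eqxx ?orbT.
have mE : m = m'.
  by apply: (scattered_gnear_eq mM m'M _ _ near_cy); rewrite ?yE !inE eqxx ?orbT.
by have /and4P[_ _ _ /negP[]] := cherryM mM; move: ecy; rewrite yE -mE e_sym.
Qed.

Lemma scattered_exchange_fix (A : {set T}) x :
  A \subset M -> x \notin M :|: a @: M -> exchange a A x = x.
Proof.
move=> sAM; rewrite in_setU negb_or => /andP[xM xaM].
apply: exchange_fix; [apply: contra xM | apply: contra xaM]; apply/subsetP => //.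
exact: imsetS.
Qed.

Section Subfamily.
Variable A : {set T}.
Hypothesis sAM : A \subset M.

Let inM : {subset A <= M} := subsetP sAM.
Let a_injA : {in A &, injective a} := sub_in2 inM a_injM.
Let a_outA : {in A, forall m, a m \notin A} :=
  fun m mA => contra (@inM (a m)) (a_notinM (inM mA)).

Lemma scattered_exchange_dom m : m \in A -> exchange a A m = a m.
Proof. exact: (exchange_dom a_outA). Qed.

Lemma scattered_exchangeK : involutive (exchange a A).
Proof. exact: (exchangeK a_injA a_outA). Qed.

Lemma exchange_near x : exchange a A x = x \/ e x (exchange a A x).
Proof.
case: exchangeP => [m mA ->|m mA ->|]; [right|right|by left].
  by have /and4P[] := cherryM (inM mA).
by rewrite e_sym; have /and4P[] := cherryM (inM mA).
Qed.

Lemma exchange_edge x y : e x y ->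
  e (exchange a A x) (exchange a A y) \/
  exists v, e v (exchange a A x) /\ e v (exchange a A y).
Proof.
have trio_m m : m \in [:: m; a m; c m] by rewrite mem_head.
have trio_a m : a m \in [:: m; a m; c m] by rewrite !inE eqxx orbT.
have pair_m m : m \in [:: m; a m] by rewrite mem_head.
have pair_a m : a m \in [:: m; a m] by rewrite !inE eqxx orbT.
have ema m : m \in A -> e m (a m) by move/inM/cherryM/and4P=> [].
have same m m' p q : m \in A -> m' \in A -> p \in [:: m; a m; c m] ->
    q \in [:: m'; a m'] -> e p q -> m = m'.
  move=> mA m'A pm qm' /edge_gnear.
  exact: scattered_gnear_eq (inM mA) (inM m'A) pm qm'.
case: (exchangeP a A x) => [m mA ->|m mA ->|_ _];
  case: (exchangeP a A y) => [m' m'A ->|m' m'A ->|_ _] exy.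
- by have mE := same _ _ _ _ mA m'A (trio_m m) (pair_m m') exy; rewrite mE e_irr in exy.
- by left; rewrite (same _ _ _ _ mA m'A (trio_m m) (pair_a m') exy) e_sym ema.
- by right; exists m; rewrite ema.
- by left; rewrite (same _ _ _ _ mA m'A (trio_a m) (pair_m m') exy) ema.
- by have mE := same _ _ _ _ mA m'A (trio_a m) (pair_a m') exy; rewrite mE e_irr in exy.
- by right; exists (a m); rewrite e_sym ema.
- by right; exists m'; rewrite e_sym exy ema.
- by right; exists (a m'); rewrite e_sym exy e_sym ema.
- by left.
Qed.

Lemma exchange_Lcol phi : is_frozen_Lcol e L phi ->
  is_Lcol e L [ffun x => phi (exchange a A x)].
Proof.
move=> frz; apply: frozen_Lcol_comp frz _ exchange_near exchange_edge => //.
exact: inv_inj scattered_exchangeK.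
Qed.

End Subfamily.

(* Around c m, the colour phi m occurs only at m, which the exchange moves
   away; so a frozen phi' agreeing with the result cannot fix m. *)
Lemma exchange_frozen_subset (A B : {set T}) phi phi' :
  A \subset M -> B \subset M -> is_frozen_Lcol e L phi -> is_frozen_Lcol e L phi' ->
  [ffun x => phi (exchange a A x)] = [ffun x => phi' (exchange a B x)] ->
  A \subset B.
Proof.
move=> sAM sBM frz frz' eq_col; apply/subsetP => m mA; apply/negPn/negP => mB.
have mM := subsetP sAM m mA; have /and4P[ema emc _ _] := cherryM mM.
have colE x : phi (exchange a A x) = phi' (exchange a B x).
  by move/ffunP/(_ x): eq_col; rewrite !ffunE.
have /andP[/is_LcolP[_ proper] _] := frz.
have phi'c : phi' (c m) = phi (c m).
  by move: (colE (c m)); rewrite !scattered_exchange_fix ?c_unmoved // => ->.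
have [y ecy phi'y] : exists2 y, e (c m) y & phi' y = phi m.
  have /andP[_ /forallP/(_ (c m))/forall_inP/(_ (phi m))] := frz'.
  rewrite phi'c (proper _ _ emc) (frozen_nbr_colour large_lists frz) 1?e_sym //.
  by move=> /(_ isT)/existsP[y /andP[ecy /eqP]]; exists y.
have [ym|ym] := eqVneq y m.
  have maB : m \notin a @: B.
    by apply/imsetP => -[m' m'B mE]; move: (a_notinM (subsetP sBM _ m'B)); rewrite -mE mM.
  subst y; move: (colE m).
  rewrite (scattered_exchange_dom sAM mA) (exchange_fix mB maB) phi'y.
  by move/eqP; rewrite eq_sym (negbTE (proper _ _ ema)).
have y_out : y \notin M :|: a @: M by apply: contra ym => /(nbr_c_moved mM ecy)/eqP.
move: (colE y); rewrite !scattered_exchange_fix // phi'y => /(frozen_nbhd_inj large_lists frz ecy).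
by rewrite e_sym => /(_ emc) /eqP; rewrite (negbTE ym).
Qed.

Lemma card_frozen_mul_exp2 : (#|frozen_Lcols e L| * 2 ^ #|M| <= #|Lcols e L|)%N.
Proof.
pose recolour (Aphi : {set T} * {ffun T -> C}) := [ffun x => Aphi.2 (exchange a Aphi.1 x)].
have recolour_inj : {in setX (powerset M) (frozen_Lcols e L) &, injective recolour}.
  move=> [A phi] [B phi']; rewrite !inE /= => /andP[sAM frz] /andP[sBM frz'] eq_col.
  have AB : A = B.
    apply/eqP; rewrite eqEsubset (exchange_frozen_subset sAM sBM frz frz' eq_col).
    exact: (exchange_frozen_subset sBM sAM frz' frz (esym eq_col)).
  subst B; congr pair; apply/ffunP => x.
  by move/ffunP/(_ (exchange a A x)): eq_col; rewrite !ffunE (scattered_exchangeK sAM).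
rewrite -card_powerset mulnC -cardsX -(card_in_imset recolour_inj).
apply/subset_leq_card/subsetP => col /imsetP[[A phi]]; rewrite !inE /= => /andP[sAM frz] ->.
exact: exchange_Lcol.
Qed.

End ScatteredCherries.

Section Balls.
Variables (T : finType) (e : rel T) (x : T).

Fixpoint gball r : {set T} :=
  if r is r'.+1 then [set y | [exists z in gball r', gnear e z y]] else [set x].

Lemma gball_step r z y : z \in gball r -> gnear e z y -> y \in gball r.+1.
Proof. by move=> zr zy; rewrite inE; apply/exists_inP; exists z. Qed.

Lemma gball_sub r : gball r \subset gball r.+1.
Proof. by apply/subsetP => z /gball_step; apply; apply: gnearxx. Qed.

Lemma card_gballS r : #|gball r.+1| = (#|gball r| + #|gball r.+1 :\: gball r|)%N.
Proof. by rewrite -(cardsID (gball r) (gball r.+1)) (setIidPr (gball_sub r)). Qed.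

Hypothesis e_sym : symmetric e.
Variable D : nat.
Hypothesis deg_le : forall v, (deg e v <= D)%N.

Lemma card_gsphere0 : (#|gball 1 :\: gball 0| <= D)%N.
Proof.
apply: leq_trans (deg_le x); apply/subset_leq_card/subsetP => y.
rewrite !inE => /andP[yx /exists_inP[z]]; rewrite inE => /eqP ->.
by rewrite /gnear eq_sym (negbTE yx).
Qed.

(* Each vertex z of the sphere of radius r+1 has a neighbour in the ball of
   radius r, so at most D - 1 of its neighbours lie outside the ball of radius r+1. *)
Lemma card_gsphereS r :
  (#|gball r.+2 :\: gball r.+1| <= #|gball r.+1 :\: gball r| * D.-1)%N.
Proof.
have cover : gball r.+2 :\: gball r.+1 \subset
    \bigcup_(z in gball r.+1 :\: gball r) ([set y | e z y] :\: gball r.+1).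
  apply/subsetP => y /setDP[]; rewrite inE => /exists_inP[z zr1 zy] yr1.
  have zr : z \notin gball r by apply: contra yr1 => /gball_step; apply.
  have ezy : e z y.
    by case/orP: zy => [/eqP zy|//]; rewrite -zy zr1 in yr1.
  have zS : z \in gball r.+1 :\: gball r by rewrite in_setD zr zr1.
  have yNz : y \in [set y | e z y] :\: gball r.+1 by rewrite in_setD yr1 in_set.
  by apply/bigcupP; exists z.
apply: leq_trans (subset_leq_card cover) (leq_trans (card_bigcup_le _ _) _).
rewrite -sum_nat_const; apply: leq_sum => z /setDP[+ zr].
rewrite inE => /exists_inP[w wr wz].
have ezw : e z w.
  by case/orP: wz => [/eqP wz|]; [rewrite -wz wr in zr | rewrite e_sym].
have : [set y | e z y] :\: gball r.+1 \subset [set y | e z y] :\ w.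
  apply/subsetP => y /setDP[ezy yr1]; apply/setD1P; split=> //.
  by apply: contraNneq yr1 => ->; apply: (subsetP (gball_sub r)).
move/subset_leq_card/leq_trans; apply.
have := cardsD1 w [set y | e z y]; rewrite inE ezw /= => cardN.
by have := deg_le z; rewrite /deg cardN; lia.
Qed.

Lemma card_gsphere_le r : (#|gball r.+1 :\: gball r| <= D * D.-1 ^ r)%N.
Proof.
elim: r => [|r IH]; first by rewrite muln1 card_gsphere0.
by rewrite (leq_trans (card_gsphereS r)) // expnSr mulnA leq_mul2r IH orbT.
Qed.

Lemma card_gball4 : (1 < D)%N -> (#|gball 4| <= D ^ 4)%N.
Proof.
move=> D_gt1; rewrite !card_gballS cards1.
have := card_gsphere_le 0; have := card_gsphere_le 1.
have := card_gsphere_le 2; have := card_gsphere_le 3.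
have -> : D = D.-1.+1 by lia.
set d := D.-1; rewrite !expnS !expn0 !muln1; nia.
Qed.

End Balls.

Definition cherry_pick (T : finType) (e : rel T) g :=
  odflt (g, g) [pick p : T * T | cherry e g p.1 p.2].

Lemma cherry_pickP (T : finType) (e : rel T) g x y :
  cherry e g x y -> cherry e g (cherry_pick e g).1 (cherry_pick e g).2.
Proof. by rewrite /cherry_pick; case: pickP => [p //|/(_ (x, y)) ->]. Qed.

Section Covering.
Variables (T : finType) (e : rel T).
Hypothesis e_sym : symmetric e.

Lemma gnearC x y : gnear e x y = gnear e y x.
Proof. by rewrite /gnear eq_sym e_sym. Qed.

Lemma cherry_deg g x y : cherry e g x y -> (1 < deg e g)%N.
Proof.
case/and4P => gx gy xy _; have <- : #|[set x; y]| = 2 by rewrite cards2 xy.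
by apply/subset_leq_card/subsetP => z; rewrite !inE => /orP[] /eqP ->.
Qed.

(* If no vertex of the closed neighbourhood N[w] is the centre of a cherry,
   then N[w] is a clique closed under adjacency, hence everything. *)
Lemma cherry_centre_near : connected_graph e -> ~ complete_graph e ->
  forall w, exists g x y, gnear e w g /\ cherry e g x y.
Proof.
move=> conn noncomplete w.
have [/existsP[g /existsP[x /existsP[y /andP[wg gxy]]]]|none] :=
  boolP [exists g, exists x, exists y, gnear e w g && cherry e g x y].
  by exists g, x, y.
have clique g x y : gnear e w g -> e g x -> e g y -> x != y -> e x y.
  move=> wg gx gy xy; apply: contraNT none => nxy.
  apply/existsP; exists g; apply/existsP; exists x; apply/existsP; exists y.
  by rewrite wg /cherry gx gy xy nxy.
have closed y z : gnear e w y -> e y z -> gnear e w z.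
  case/orP => [/eqP <- wz|wy yz]; first exact: edge_gnear.
  have [<-|wz] := eqVneq w z; first exact: gnearxx.
  by apply/edge_gnear/(clique y) => //; [apply: edge_gnear | rewrite e_sym].
have near_last p v : gnear e w v -> path e v p -> gnear e w (last v p).
  by elim: p v => [|u p IH] v //= wv /andP[vu /IH]; apply; apply: closed wv vu.
have all_near z : gnear e w z.
  by have /connectP[p wp ->] := conn w z; apply: near_last (gnearxx e w) wp.
exfalso; apply: noncomplete => x y.
case/orP: (all_near x) => [/eqP <-|wx] xy.
  by case/orP: (all_near y) => [/eqP yE|//]; rewrite yE eqxx in xy.
case/orP: (all_near y) => [/eqP <-|wy]; first by rewrite e_sym.
exact: clique (gnearxx e w) wx wy xy.
Qed.

Lemma gball3_chain m p q g :
  gnear e m p -> gnear e p q -> gnear e q g -> g \in gball e m 3.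
Proof.
move=> mp pq qg; apply: gball_step qg; apply: gball_step pq; apply: gball_step mp.
exact: set11.
Qed.

Variables (a c : T -> T).

Lemma not_far_gball3 m g :
  cherry e m (a m) (c m) -> cherry e g (a g) (c g) ->
  ~~ (far_cherries e a c g m && far_cherries e a c m g) -> g \in gball e m 3.
Proof.
have trio_near v p : cherry e v (a v) (c v) -> p \in [:: v; a v; c v] -> gnear e v p.
  case/and4P => eva evc _ _; rewrite !inE => /or3P[] /eqP ->;
  by rewrite ?gnearxx ?edge_gnear.
have pair_trio v q : q \in [:: v; a v] -> q \in [:: v; a v; c v].
  by rewrite !inE => /orP[] ->; rewrite ?orbT.
move=> m_cherry g_cherry; rewrite negb_and.
case/orP => /forall_inPn[p p_trio /forall_inPn[q q_pair /negPn pq]].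
- apply: gball3_chain (trio_near _ _ m_cherry (pair_trio _ _ q_pair)) _ _.
    by rewrite gnearC; exact: pq.
  by rewrite gnearC; apply: trio_near.
- apply: gball3_chain (trio_near _ _ m_cherry p_trio) pq _.
  by rewrite gnearC; apply: trio_near g_cherry (pair_trio _ _ q_pair).
Qed.

Lemma scatteredU1 M g : scattered e a c M ->
  {in M, forall m, m != g -> far_cherries e a c g m && far_cherries e a c m g} ->
  scattered e a c (g |: M).
Proof.
move=> scM far_g; apply/forall_inP => m1 /setU1P[->|m1M];
  apply/forall_inP => m2 /setU1P[->|m2M]; apply/implyP => m12.
- by rewrite eqxx in m12.
- by rewrite eq_sym in m12; case/andP: (far_g m2 m2M m12).
- by case/andP: (far_g m1 m1M m12).
- by move/forall_inP/(_ _ m1M)/forall_inP/(_ _ m2M)/implyP/(_ m12): scM.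
Qed.

Lemma maximal_scattered_exists :
  exists M : {set T}, [/\ {in M, forall m, cherry e m (a m) (c m)}, scattered e a c M &
    forall g, cherry e g (a g) (c g) -> g \notin M -> ~~ scattered e a c (g |: M)].
Proof.
pose P (S : {set T}) := scattered e a c S && [forall m in S, cherry e m (a m) (c m)].
have P0 : P set0 by apply/andP; split; apply/forall_inP => m; rewrite inE.
case: (arg_maxnP (fun S : {set T} => #|S|) P0) => M /andP[scM /forall_inP cherryM] maxM.
exists M; split=> // g g_cherry gM; apply/negP => scgM.
have /maxM : P (g |: M).
  by rewrite /P scgM; apply/forall_inP => m /setU1P[->|/cherryM].
by rewrite cardsU1 gM /= add1n ltnn.
Qed.

Variable M : {set T}.
Hypothesis a_c_cherry : forall g x y, cherry e g x y -> cherry e g (a g) (c g).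
Hypothesis cherryM : {in M, forall m, cherry e m (a m) (c m)}.
Hypothesis scM : scattered e a c M.
Hypothesis maxM : forall g, cherry e g (a g) (c g) -> g \notin M -> ~~ scattered e a c (g |: M).

Lemma maximal_scattered_cover : connected_graph e -> ~ complete_graph e ->
  forall w, exists2 m, m \in M & w \in gball e m 4.
Proof.
move=> conn noncomplete w.
have [g [x [y [wg /a_c_cherry g_cherry]]]] := cherry_centre_near conn noncomplete w.
rewrite gnearC in wg.
have [gM|gM] := boolP (g \in M).
  exists g => //; apply: gball_step wg.
  exact: gball3_chain (gnearxx e g) (gnearxx e g) (gnearxx e g).
have [m mM not_far] : exists2 m, m \in M &
    ~~ (far_cherries e a c g m && far_cherries e a c m g).
  apply/exists_inP; apply: contraNT (maxM g_cherry gM) => /exists_inPn far_g.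
  by apply: scatteredU1 scM _ => m mM _; apply/negPn/far_g.
exists m => //; apply: gball_step wg.
exact: not_far_gball3 (cherryM mM) g_cherry not_far.
Qed.

Lemma card_le_maximal_scattered : connected_graph e -> ~ complete_graph e ->
  (#|T| <= #|M| * maxdeg e ^ 4)%N.
Proof.
move=> conn noncomplete.
have cover : [set: T] \subset \bigcup_(m in M) gball e m 4.
  apply/subsetP => w _; apply/bigcupP.
  by have [m mM wm] := maximal_scattered_cover conn noncomplete w; exists m.
rewrite -cardsT (leq_trans (subset_leq_card cover)) // (leq_trans (card_bigcup_le _ _)) //.
rewrite -sum_nat_const; apply: leq_sum => m mM; apply: card_gball4 => // [v|].
  exact: leq_bigmax.
exact: leq_trans (cherry_deg (cherryM mM)) (leq_bigmax m).
Qed.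

End Covering.

Local Open Scope ring_scope.

Lemma ratio_le_exp2N (R : realType) (F N k n d : nat) :
  (F * 2 ^ k <= N)%N -> (n <= k * d)%N ->
  (F%:R / N%:R : R) <= 2 `^ (- (n%:R / d%:R)).
Proof.
move=> FN nkd.
have ratio_le : (F%:R / N%:R : R) <= (2 ^+ k)^-1.
  have [->|N0] := eqVneq N 0%N; first by rewrite invr0 mulr0 invr_ge0 exprn_ge0.
  rewrite ler_pdivrMr ?ltr0n ?lt0n // mulrC ler_pdivlMr ?exprn_gt0 //.
  by rewrite -natrX -natrM ler_nat.
apply: le_trans ratio_le _.
rewrite -powR_mulrn // -powRN; apply: ler_powR; first by rewrite ler1n.
rewrite lerN2; have [->|d0] := eqVneq d 0%N; first by rewrite invr0 mulr0.
by rewrite ler_pdivrMr ?ltr0n ?lt0n // -natrM ler_nat.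
Qed.

Theorem mainTheorem19 (R : realType) (T C : finType) (e : rel T) (L : T -> {set C}) :
  simple_graph e -> connected_graph e ->
  (forall v : T, (deg e v + 1 <= #|L v|)%N) ->
  ~ complete_graph e ->
  (#|frozen_Lcols e L|%:R / #|Lcols e L|%:R : R)
    <= (2 : R) `^ (- ((#|T|%:R : R) / ((maxdeg e)%:R ^+ 4))).
Proof.
move=> [e_sym e_irr] conn large_lists noncomplete.
pose a g := (cherry_pick e g).1; pose c g := (cherry_pick e g).2.
have a_c_cherry g x y : cherry e g x y -> cherry e g (a g) (c g) := @cherry_pickP T e g x y.
have [M [cherryM scM maxM]] := maximal_scattered_exists e a c.
rewrite -natrX; apply: ratio_le_exp2N.
  exact: (card_frozen_mul_exp2 e_sym e_irr large_lists cherryM scM).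
exact: (card_le_maximal_scattered e_sym a_c_cherry cherryM scM maxM conn noncomplete).
Qed.
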